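(* Let $U$ be a countably infinite universe and $\mathcal{C}=(L_1,L_2,\ldots)$ a countably infinite collection of languages over $U$, and let $\mathcal{C}(L_i)$ and $m^\star(L_i)$ be as determined by the Procedure in the context. For every $i\ge1$, $\mathcal{C}(L_i)$ is either empty, or contains at least one entry $L_j\ne L_i$ with $j<i$; furthermore, every entry $L_j\ne L_i$ of $\mathcal{C}(L_i)$ satisfies $m^\star(L_j)<m^\star(L_i)$.
   Context: A language is an infinite subset of $U$; a collection is a sequence of languages (repetitions allowed, entries distinguished by index). Procedure. Set $\mathcal{C}'_0=()$. For $i=1,2,3,\ldots$: append the entry $L_i$ at the end of $\mathcal{C}'_{i-1}$ to get $\mathcal{C}'_i=(L'_1,\ldots,L'_i)$ (a permutation of the entries $L_1,\ldots,L_i$), and set $j=i$. Repeat: (1) among all subcollections $\mathcal{D}$ of the entries $(L'_1,\ldots,L'_j)$ that include the entry $L'_j$ and satisfy $|\bigcap_{L\in\mathcal{D}}L|<\infty$, let $\mathcal{C}_{\mathrm{chk}}$ be one maximizing $|\bigcap_{L\in\mathcal{D}}L|$ and $m_{\mathrm{chk}}$ this maximum; if no such $\mathcal{D}$ exists, set $\mathcal{C}_{\mathrm{chk}}=()$, $m_{\mathrm{chk}}=0$. (2) If $j\le1$ or $m_{\mathrm{chk}}>m^\star(L'_{j-1})$ (already fixed since $L'_{j-1}$ has original index $<i$), stop the loop. (3) Otherwise swap positions $j-1$ and $j$ in $\mathcal{C}'_i$, set $j\leftarrow j-1$ and return to (1). When the loop stops, set $\mathcal{C}(L_i)=\mathcal{C}_{\mathrm{chk}}$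 and $m^\star(L_i)=m_{\mathrm{chk}}$. *)

From Stdlib Require Import List Arith Lia.
Import ListNotations.

Definition finite_set {U : Type} (A : U -> Prop) : Prop :=
  exists s : list U, forall x, A x -> In x s.

Definition infinite_set {U : Type} (A : U -> Prop) : Prop := ~ finite_set A.

Definition card_is {U : Type} (A : U -> Prop) (n : nat) : Prop :=
  exists s : list U, NoDup s /\ length s = n /\ (forall x, A x <-> In x s).

Definition countably_infinite (U : Type) : Prop :=
  exists f : nat -> U, (forall a b, f a = f b -> a = b) /\ (forall u, exists n, f n = u).

(* The collection: L i for i >= 1 (index 0 unused).
   A subcollection of entries is a list of original indices.
   Intersection of the languages of a subcollection: *)
Definition inter {U : Type} (L : nat -> U -> Prop) (D : list nat) : U -> Prop :=
  fun x => forall k, In k D -> L k x.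

(* The entry at 1-based position j of the current ordering p
   (p is a list of original indices). *)
Definition pos (p : list nat) (j : nat) : nat := nth (j - 1) p 0.

Definition admissible {U : Type} (L : nat -> U -> Prop) (p : list nat) (j : nat)
  (D : list nat) (m : nat) : Prop :=
  NoDup D /\ (forall k, In k D -> In k (firstn j p)) /\ In (pos p j) D /\
  card_is (inter L D) m.

Definition chk_spec {U : Type} (L : nat -> U -> Prop) (p : list nat) (j : nat)
  (Cchk : list nat) (mchk : nat) : Prop :=
  (admissible L p j Cchk mchk /\
     (forall D m, admissible L p j D m -> m <= mchk))
  \/
  ((forall D m, ~ admissible L p j D m) /\ Cchk = [] /\ mchk = 0).

Definition swap_at (p : list nat) (j : nat) : list nat :=
  firstn (j - 2) p ++ [pos p j; pos p (j - 1)] ++ skipn j p.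

(* The inner loop, started at position j on ordering p, ends with
   final ordering, C_chk and m_chk.  mstar gives the (already fixed) values
   m^*(L_k) for earlier entries. *)
Inductive Loop {U : Type} (L : nat -> U -> Prop) (mstar : nat -> nat) :
  list nat -> nat -> list nat -> list nat -> nat -> Prop :=
| Loop_stop : forall p j C m,
    chk_spec L p j C m ->
    (j <= 1 \/ mstar (pos p (j - 1)) < m) ->
    Loop L mstar p j p C m
| Loop_swap : forall p j C m p' C' m',
    chk_spec L p j C m ->
    ~ (j <= 1 \/ mstar (pos p (j - 1)) < m) ->
    Loop L mstar (swap_at p j) (j - 1) p' C' m' ->
    Loop L mstar p j p' C' m'.

(* A complete run of the Procedure: perm i = C'_i, Cof i = C(L_i),
   mstar i = m^*(L_i), for all i >= 1. *)
Definition Run {U : Type} (L : nat -> U -> Prop) (perm : nat -> list nat)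
  (Cof : nat -> list nat) (mstar : nat -> nat) : Prop :=
  perm 0 = [] /\
  forall i, 1 <= i ->
    Loop L mstar (perm (i - 1) ++ [i]) i (perm i) (Cof i) (mstar i).

From Stdlib Require Import List Arith.
From Stdlib Require Import Lia Sorted.
Import ListNotations.

(* The inner loop moves the new entry L_i leftwards past entries whose m^*
   is at least the current m_chk, and m_chk can only decrease as the window
   L'_1..L'_j shrinks.  Hence every ordering C'_i is sorted by m^*, and L_i
   stops just to the right of entries of strictly smaller m^*.  A nonempty
   C(L_i) contains L_i and otherwise only entries of that prefix; since L_i
   is infinite but the intersection is finite, it contains another entry,
   which is older than L_i and has smaller m^*. *)

Lemma StronglySorted_app_iff {A} (R : A -> A -> Prop) (a b : list A) :
  StronglySorted R (a ++ b) <->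
  StronglySorted R a /\ StronglySorted R b /\
  (forall x y, In x a -> In y b -> R x y).
Proof.
  induction a as [|z a IH]; simpl.
  - split; [|tauto]. intros Hb. repeat split; [constructor|exact Hb|tauto].
  - split.
    + intros [Hab Hz]%StronglySorted_inv.
      apply IH in Hab as (Ha & Hb & Hab). apply Forall_app in Hz as [Hza Hzb].
      rewrite Forall_forall in Hzb.
      repeat split; [constructor; assumption|assumption|].
      intros x y [<- | Hx] Hy; auto.
    + intros (Hza & Hb & Hab). apply StronglySorted_inv in Hza as [Ha Hz].
      constructor; [apply IH; auto|].
      apply Forall_app. split; [exact Hz|].
      apply Forall_forall. intros y Hy. apply Hab; simpl; auto.
Qed.

Lemma StronglySorted_insert {A} (R : A -> A -> Prop) (a c : list A) (x : A) :
  StronglySorted R (a ++ c) ->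
  (forall y, In y a -> R y x) -> (forall y, In y c -> R x y) ->
  StronglySorted R (a ++ x :: c).
Proof.
  intros (Ha & Hc & Hac)%StronglySorted_app_iff Hax Hxc.
  apply StronglySorted_app_iff. split; [exact Ha|split].
  - constructor; [exact Hc|apply Forall_forall, Hxc].
  - intros y z Hy [<- | Hz]; auto.
Qed.

Local Notation sorted_by f := (StronglySorted (fun x y => f x <= f y)).

Lemma sorted_by_lt_last (f : nat -> nat) (a : list nat) (m : nat) :
  sorted_by f a -> (forall a1 z, a = a1 ++ [z] -> f z < m) ->
  forall y, In y a -> f y < m.
Proof.
  destruct a as [|z a1 _] using rev_ind; [contradiction|].
  intros (_ & _ & Hcross)%StronglySorted_app_iff Hlast y Hy.
  specialize (Hlast a1 z eq_refl).
  apply in_app_or in Hy as [Hy | [<- | []]]; [|exact Hlast].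
  specialize (Hcross y z Hy (or_introl eq_refl)). lia.
Qed.

Lemma firstn_mid {A} (a b : list A) (i : A) :
  firstn (S (length a)) (a ++ i :: b) = a ++ [i].
Proof.
  induction a as [|z a IH]; [reflexivity|].
  cbn [length app]. rewrite firstn_cons, IH. reflexivity.
Qed.

Lemma pos_mid (a b : list nat) (i : nat) : pos (a ++ i :: b) (S (length a)) = i.
Proof. unfold pos. rewrite Nat.sub_1_r. apply nth_middle. Qed.

Lemma swap_at_mid (a b : list nat) (x i : nat) :
  swap_at (a ++ x :: i :: b) (S (S (length a))) = a ++ i :: x :: b.
Proof.
  unfold swap_at, pos.
  replace (S (S (length a)) - 1 - 1) with (length a + 0) by lia.
  replace (S (S (length a)) - 1) with (length a + 1) by lia.
  replace (S (S (length a)) - 2) with (length a + 0) by lia.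
  replace (S (S (length a))) with (length a + 2) by lia.
  rewrite firstn_app_2, !app_nth2_plus, skipn_app, skipn_all2 by lia.
  replace (length a + 2 - length a) with 2 by lia. simpl. now rewrite app_nil_r.
Qed.

Section Checks.
Variables (U : Type) (L : nat -> U -> Prop).

Lemma admissible_mid_iff (a b : list nat) (i : nat) (D : list nat) (m : nat) :
  admissible L (a ++ i :: b) (S (length a)) D m <->
  NoDup D /\ incl D (a ++ [i]) /\ In i D /\ card_is (inter L D) m.
Proof. unfold admissible. rewrite firstn_mid, pos_mid. reflexivity. Qed.

Lemma admissible_mid_incl (a a' b b' : list nat) (i : nat) (D : list nat) (m : nat) :
  incl a a' ->
  admissible L (a ++ i :: b) (S (length a)) D m ->
  admissible L (a' ++ i :: b') (S (length a')) D m.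
Proof.
  intros Ha (HD & Hincl & Hi & Hcard)%admissible_mid_iff.
  apply admissible_mid_iff. repeat split; auto.
  eapply incl_tran; [exact Hincl|]. apply incl_app_app; [exact Ha|apply incl_refl].
Qed.

Lemma chk_spec_max (p : list nat) (j : nat) (C D : list nat) (m m0 : nat) :
  chk_spec L p j C m -> admissible L p j D m0 -> m0 <= m.
Proof.
  intros [[_ Hmax] | [Hnone _]] HD; [exact (Hmax D m0 HD)|].
  exfalso. exact (Hnone D m0 HD).
Qed.

Lemma chk_spec_cases (p : list nat) (j : nat) (C : list nat) (m : nat) :
  chk_spec L p j C m -> (C = [] /\ m = 0) \/ admissible L p j C m.
Proof. intros [[HC _] | (_ & -> & ->)]; auto. Qed.

Lemma chk_spec_mid_mono (a a' b b' C C' : list nat) (i m m' : nat) :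
  incl a a' ->
  chk_spec L (a ++ i :: b) (S (length a)) C m ->
  chk_spec L (a' ++ i :: b') (S (length a')) C' m' ->
  m <= m'.
Proof.
  intros Ha Hchk Hchk'.
  destruct (chk_spec_cases _ _ _ _ Hchk) as [[_ ->] | HC]; [lia|].
  eapply chk_spec_max; [exact Hchk'|]. eapply admissible_mid_incl; eassumption.
Qed.

Lemma finite_inter_other_entry (D : list nat) (i : nat) :
  infinite_set (L i) -> In i D -> finite_set (inter L D) ->
  exists j, In j D /\ j <> i.
Proof.
  intros Hinf Hi [s Hs].
  destruct (Forall_Exists_dec (fun j => j = i) (fun j => Nat.eq_dec j i) D)
    as [Hall | Hother%Exists_exists]; [exfalso|exact Hother].
  rewrite Forall_forall in Hall.
  apply Hinf. exists s. intros x Hx. apply Hs.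
  intros k Hk. rewrite (Hall k Hk). exact Hx.
Qed.

End Checks.

Lemma card_is_finite {U} (A : U -> Prop) (n : nat) : card_is A n -> finite_set A.
Proof. intros (s & _ & _ & Hs). exists s. intros x. apply Hs. Qed.

Section Procedure.
Variables (U : Type) (L : nat -> U -> Prop) (mstar : nat -> nat).

(* When the loop swaps, m_chk <= m^* of the entry passed over, and by
   [chk_spec_mid_mono] the final m_chk is no larger. *)
Lemma Loop_outcome (a b p' C : list nat) (i m : nat) :
  Loop L mstar (a ++ i :: b) (S (length a)) p' C m ->
  exists a0 c, a = a0 ++ c /\ p' = a0 ++ i :: c ++ b /\
    (forall y, In y c -> m <= mstar y) /\
    (forall a1 z, a0 = a1 ++ [z] -> mstar z < m) /\
    chk_spec L p' (S (length a0)) C m.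
Proof.
  remember (a ++ i :: b) as p eqn:Ep. remember (S (length a)) as j eqn:Ej.
  intros HL. revert a b Ep Ej.
  induction HL as [p j C m Hchk Hstop | p j C m p' C' m' Hchk Hswap _ IH];
    intros a b -> ->.
  - exists a, []. repeat split; [now rewrite app_nil_r|contradiction| |exact Hchk].
    intros a1 z ->. destruct Hstop as [Hstop | Hlt].
    + rewrite length_app in Hstop. simpl in Hstop. lia.
    + replace (S (length (a1 ++ [z])) - 1) with (S (length a1)) in Hlt
        by (rewrite length_app; simpl; lia).
      rewrite <- app_assoc in Hlt. simpl app in Hlt. rewrite pos_mid in Hlt. exact Hlt.
  - destruct a as [|x a1 _] using rev_ind; [exfalso; apply Hswap; now left|].
    assert (Hp : (a1 ++ [x]) ++ i :: b = a1 ++ x :: i :: b)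
      by now rewrite <- app_assoc.
    assert (Hj : S (length (a1 ++ [x])) = S (S (length a1)))
      by (rewrite length_app; simpl; lia).
    rewrite Hp, Hj, swap_at_mid in IH. rewrite Hp, Hj in Hswap.
    assert (Hmx : m <= mstar x).
    { apply Nat.nlt_ge. intros Hlt. apply Hswap. right.
      replace (S (S (length a1)) - 1) with (S (length a1)) by lia.
      now rewrite pos_mid. }
    destruct (IH a1 (x :: b) eq_refl eq_refl)
      as (a0 & c & -> & -> & Hc & Hlast & Hchk').
    exists a0, (c ++ [x]). rewrite <- !app_assoc.
    repeat split; [|exact Hlast|exact Hchk'].
    intros y [Hy | [<- | []]]%in_app_or; [exact (Hc y Hy)|].
    enough (m' <= m) by lia.
    eapply chk_spec_mid_mono; [|exact Hchk'|exact Hchk].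
    intros y Hy. apply in_or_app. left. apply in_or_app. now left.
Qed.

Variables (perm Cof : nat -> list nat).
Hypothesis Hrun : Run L perm Cof mstar.

Lemma Run_step (n : nat) :
  length (perm n) = n ->
  exists a0 c, perm n = a0 ++ c /\ perm (S n) = a0 ++ S n :: c /\
    (forall y, In y c -> mstar (S n) <= mstar y) /\
    (forall a1 z, a0 = a1 ++ [z] -> mstar z < mstar (S n)) /\
    chk_spec L (perm (S n)) (S (length a0)) (Cof (S n)) (mstar (S n)).
Proof.
  intros Hlen. destruct Hrun as [_ Hloop].
  specialize (Hloop (S n) ltac:(lia)). simpl in Hloop. rewrite Nat.sub_0_r in Hloop.
  pose proof (Loop_outcome (perm n) [] (perm (S n)) (Cof (S n)) (S n) (mstar (S n)))
    as Houtcome.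
  rewrite Hlen in Houtcome.
  destruct (Houtcome Hloop) as (a0 & c & Hn & Hp & Hc & Hlast & Hchk).
  rewrite app_nil_r in Hp. eauto 10.
Qed.

Lemma Run_perm_sorted (n : nat) :
  length (perm n) = n /\ (forall k, In k (perm n) -> k <= n) /\
  sorted_by mstar (perm n).
Proof.
  induction n as [|n (Hlen & Hbound & Hsorted)].
  - destruct Hrun as [-> _]. repeat split; [contradiction|constructor].
  - destruct (Run_step n Hlen) as (a0 & c & Hn & -> & Hc & Hlast & _).
    rewrite Hn in Hlen, Hbound, Hsorted. rewrite length_app in *. simpl.
    repeat split; [lia| |].
    + intros k [Hk | [<- | Hk]]%in_app_or; [|lia|];
        enough (k <= n) by lia; apply Hbound, in_or_app; auto.
    + apply StronglySorted_insert; [exact Hsorted| |exact Hc].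
      apply StronglySorted_app_iff in Hsorted as [Ha0 _].
      intros y Hy. apply Nat.lt_le_incl. exact (sorted_by_lt_last _ _ _ Ha0 Hlast y Hy).
Qed.

End Procedure.

Theorem mainTheorem10 (U : Type) (L : nat -> U -> Prop)
  (perm : nat -> list nat) (Cof : nat -> list nat) (mstar : nat -> nat) :
  countably_infinite U ->
  (forall i, 1 <= i -> infinite_set (L i)) ->
  Run L perm Cof mstar ->
  forall i, 1 <= i ->
    (Cof i = nil \/ exists j, In j (Cof i) /\ j <> i /\ j < i) /\
    (forall j, In j (Cof i) -> j <> i -> mstar j < mstar i).
Proof.
  intros _ Hinf Hrun [|n] Hi; [lia|].
  destruct (Run_perm_sorted _ _ _ _ _ Hrun n) as (Hlen & Hbound & Hsorted).
  destruct (Run_step _ _ _ _ _ Hrun n Hlen) as (a0 & c & Hn & Hp & _ & Hlast & Hchk).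
  rewrite Hn in Hbound, Hsorted.
  apply StronglySorted_app_iff in Hsorted as [Ha0 _].
  pose proof (sorted_by_lt_last _ _ _ Ha0 Hlast) as Hless.
  destruct (chk_spec_cases _ _ _ _ _ _ Hchk) as [[-> _] | Hadm];
    [split; [now left|contradiction]|].
  rewrite Hp in Hadm. apply admissible_mid_iff in Hadm as (_ & Hincl & Hnew & Hcard).
  assert (Hold : forall j, In j (Cof (S n)) -> j <> S n -> In j a0).
  { intros j Hj Hji. apply Hincl, in_app_or in Hj as [Hj | [<- | []]]; [exact Hj|].
    now contradiction Hji. }
  split.
  - right. destruct (finite_inter_other_entry _ _ _ _ (Hinf _ Hi) Hnew
      (card_is_finite _ _ Hcard)) as (j & Hj & Hji).
    exists j. repeat split; [exact Hj|exact Hji|].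
    enough (j <= n) by lia. apply Hbound, in_or_app. left. now apply Hold.
  - intros j Hj Hji. exact (Hless j (Hold j Hj Hji)).
Qed.
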